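(* Let $\alpha>0$, $\gamma\in(0,1)$ and suppose $2k\le\gamma n$. Suppose the data $x_1,\dots,x_n$ have histogram $\theta=(\theta_1,\dots,\theta_r,0,\dots,0)\in\Theta$ for some $1\le r<k$ (all coordinates after the $r$-th equal zero). Let $z=(z_1,\dots,z_k)$ be given by $z_j=\theta_j$ if $\theta_j=0$, and $z_j=\theta_j+\frac{2}{n\alpha}L_j$ otherwise, where $L_1,\dots,L_k$ are i.i.d. Laplace random variables with mean zero and rate one, and let $\delta(z)\in\arg\min_{\theta'\in\Theta}\|z-\theta'\|_1$. Then $\|\theta-\delta(z)\|_1=O_P\!\left(\frac{r}{\alpha n}\right)$; that is, for every $\varepsilon>0$ there is $M<\infty$ depending only on $\varepsilon$ such that $\mathbb P\big(\|\theta-\delta(z)\|_1> M\,\frac{r}{\alpha n}\big)\le\varepsilon$.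
   Context: The sample space is partitioned into $k$ cells $B_1,\dots,B_k$; the histogram of $x_1,\dots,x_n$ is $\theta_j=\frac1n\sum_{i=1}^n\mathbf 1\{x_i\in B_j\}$, and $\Theta=\{(a_1/n,\dots,a_k/n):a_j\in\mathbb Z_{\ge0},\ \sum_ja_j=n\}$ is the set of all such histograms. $\|v\|_1=\sum_j|v_j|$. The Laplace distribution with mean zero and rate one has density $\frac12e^{-|x|}$. The probability is over the Laplace noise. *)

From HB Require Import structures.
From mathcomp Require Import all_boot all_order all_algebra.
From mathcomp Require Import all_classical all_reals all_analysis.
Set Implicit Arguments. Unset Strict Implicit. Unset Printing Implicit Defensive.
Import Order.TTheory GRing.Theory Num.Theory.
Local Open Scope classical_set_scope.
Local Open Scope ring_scope.

Definition norm1 (R : realType) (k : nat) (v : 'I_k -> R) : R :=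
  \sum_(j < k) `|v j|.

Definition is_hist (R : realType) (n k : nat) (theta : 'I_k -> R) : Prop :=
  exists a : 'I_k -> nat, (\sum_(j < k) a j)%N = n /\
    forall j, theta j = (a j)%:R / n%:R.

Definition laplace_rv d (T : measurableType d) (R : realType)
    (P : probability T R) (X : T -> R) : Prop :=
  measurable_fun setT X /\
  forall A : set R, measurable A ->
    P (X @^-1` A) =
    (\int[@lebesgue_measure R]_(x in A) ((2^-1 * expR (- `|x|)) : R)%:E)%E.

Definition mutually_independent d (T : measurableType d) (R : realType)
    (P : probability T R) (k : nat) (X : 'I_k -> T -> R) : Prop :=
  forall A : 'I_k -> set R, (forall j, measurable (A j)) ->
    P (\bigcap_(j in [set: 'I_k]) (X j @^-1` A j)) =
    (\prod_(j < k) P (X j @^-1` A j))%E.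

(* Since delta z is a histogram nearest to z and theta is itself a histogram,
   |theta - delta z|_1 <= 2 |theta - z|_1 <= 4/(n alpha) (|L_1| + ... + |L_r|).
   A standard Laplace variable has P(|L| > t) = exp(-t), hence E|L| = 1, and
   Markov's inequality gives P(|L_1| + ... + |L_r| > r/eps) <= eps, so M = 4/eps
   works. *)

From HB Require Import structures.
From mathcomp Require Import all_boot all_order all_algebra.
From mathcomp Require Import all_classical all_reals all_analysis.
From mathcomp Require Import ring lra measurable_realfun.
Import Order.TTheory GRing.Theory Num.Theory numFieldNormedType.Exports.
Set Implicit Arguments. Unset Strict Implicit. Unset Printing Implicit Defensive.
Local Open Scope classical_set_scope.
Local Open Scope ring_scope.

Local Notation laplace_pdf x := (2^-1 * expR (- `|x|)).

Lemma continuous_laplace_pdf (R : realType) : continuous (fun x : R => laplace_pdf x).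
Proof.
move=> x; apply: (@continuousM _ R^o (fun=> 2^-1) (fun x => expR (- `|x|))).
  exact: cst_continuous.
apply: continuous_comp; last exact: continuous_expR.
by apply: (@continuousN _ R^o); exact: norm_continuous.
Qed.

Lemma integral_laplace_pdf_itv0c (R : realType) (t : R) : 0 < t ->
  (\int[@lebesgue_measure R]_(x in `[0%R, t]) (laplace_pdf x)%:E
   = (2^-1 * (1 - expR (- t)))%:E)%E.
Proof.
move=> t0; have := exponential_prob_itv0c 1 t0; rewrite mulN1r EFinM EFinB => <-.
rewrite -ge0_integralZl_EFin//=; last 2 first.
- by move=> x _; rewrite lee_fin exponential_pdf_ge0.
- by apply/measurable_EFinP; apply: measurable_funTS; exact: measurable_exponential_pdf.
apply: eq_integral => x; rewrite inE/= in_itv/= => /andP[x0 _].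
by rewrite exponential_pdfE// mul1r mulN1r ger0_norm.
Qed.

Lemma integral_laplace_pdf_itvNc (R : realType) (t : R) : 0 < t ->
  (\int[@lebesgue_measure R]_(x in `[(- t)%R, t]) (laplace_pdf x)%:E
   = (1 - expR (- t))%:E)%E.
Proof.
move=> t0.
have mf (D : set R) : measurable_fun D (fun x : R => (laplace_pdf x)%:E).
  apply/measurable_EFinP/measurable_funTS.
  exact: continuous_measurable_fun (@continuous_laplace_pdf R).
have -> : `[- t, t]%classic = `[- t, 0]%classic `|` `]0, t]%classic :> set R.
  by rewrite (@itv_bndbnd_setU _ _ _ (BRight 0)) // bnd_simp ?oppr_le0 ltW.
rewrite ge0_integral_setU//=; last 2 first.
- exact: mf.
- apply/disj_setPS => x [/=]; rewrite !in_itv/= => /andP[_ x0] /andP[x0' _].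
  by rewrite ltNge x0 in x0'.
rewrite integral_itv_obnd_cbnd// -[in `[- t, 0]]oppr0.
rewrite integration_by_substitution_oppr ?ltW//; last first.
  exact/continuous_subspaceT/continuous_laplace_pdf.
under eq_integral do rewrite /= normrN.
by rewrite integral_laplace_pdf_itv0c// -EFinD; congr EFin; lra.
Qed.

Section laplace_rv.
Context d (T : measurableType d) (R : realType) (P : probability T R) (X : T -> R).
Hypothesis hX : laplace_rv P X.

Lemma laplace_rv_tail (t : R) : 0 < t -> P [set w | t < `|X w|] = (expR (- t))%:E.
Proof.
move=> t0; have [mX PX] := hX.
have mI : measurable (X @^-1` `[- t, t]).
  by rewrite -[X @^-1` _]setTI; exact: mX.
have -> : [set w | t < `|X w|] = ~` (X @^-1` `[- t, t]).
  by apply/seteqP; split => w /=; rewrite in_itv/= -ler_norml ltNge => /negP.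
by rewrite probability_setC// PX// integral_laplace_pdf_itvNc// -EFinB opprB addrC subrK.
Qed.

(* E|X| = int_0^oo P(|X| > t) dt = int_0^oo exp(-t) dt *)
Lemma laplace_rv_abs_integral : (\int[P]_w `|X w|%:E = 1)%E.
Proof.
have mY : measurable_fun setT (fun w => `|X w|) by apply: measurableT_comp => //; exact: hX.1.
pose Y : {RV P >-> R} := mfun_Sub (mem_set mY : _ \in mfun).
have := @ge0_expectation_ccdf _ _ _ P Y (fun w => normr_ge0 _).
rewrite expectation_def => ->.
rewrite -integral_itv_obnd_cbnd; last exact: measurable_funS (ccdf_measurable Y).
transitivity (\int[lebesgue_measure]_(x in `]0%R, +oo[) (expR (- x : R))%:E)%E.
  apply: eq_integral => x; rewrite inE/= in_itv/= andbT => x0.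
  rewrite /ccdf /distribution /pushforward /= -laplace_rv_tail//.
  by congr (P _); apply/seteqP; split => w /=; rewrite in_itv/= andbT.
rewrite integral_itv_obnd_cbnd; last first.
  by apply/measurable_EFinP; apply: measurableT_comp => //.
rewrite -(integral_exponential_pdf ltr01) integral_mkcond.
apply: eq_integral => x _; rewrite /exponential_pdf !patchE.
by case: ifP => _; rewrite ?mul1r ?mulN1r.
Qed.

End laplace_rv.

Lemma laplace_sum_abs_gt d (T : measurableType d) (R : realType) (P : probability T R)
    (m : nat) (L : 'I_m -> T -> R) (c : R) :
  (forall i, laplace_rv P (L i)) -> 0 < c ->
  (P [set w | (c < \sum_(i < m) `|L i w|)%R] <= (m%:R / c)%:E)%E.
Proof.
move=> hL c0; pose S w := \sum_(i < m) `|L i w|.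
have mS : measurable_fun setT S.
  by apply: measurable_sum => i; apply: measurableT_comp => //; exact: (hL i).1.
have S0 w : 0 <= S w by apply: sumr_ge0 => i _.
have intS : (\int[P]_w (S w)%:E = m%:R%:E)%E.
  under eq_integral do rewrite /S -sumEFin.
  rewrite ge0_integral_sum//; last first.
    by move=> i; apply/measurable_EFinP; apply: measurableT_comp => //; exact: (hL i).1.
  under eq_bigr do rewrite laplace_rv_abs_integral//.
  by rewrite sumEFin sumr_const card_ord.
have := @le_integral_abse _ _ _ P setT measurableT (EFin \o S) c _ c0.
rewrite setTI; under eq_integral do rewrite /= ger0_norm//.
have mES : measurable_fun setT (EFin \o S) by exact/measurable_EFinP.
rewrite intS => /(_ mES) markovS.
rewrite mulrC EFinM lee_pdivlMl//; apply: le_trans markovS; rewrite lee_pmul2l ?lte_fin//.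
apply: le_measure; rewrite ?inE.
- by rewrite -preimage_itvoy -[X in measurable X]setTI; exact: mS.
- by rewrite -[X in measurable X]setTI; apply: emeasurable_fun_c_infty => //; exact: measurableT_comp.
- by move=> w /= /ltW; rewrite lee_fin ger0_norm.
Qed.

Lemma norm1_sub_nearest_le (R : realType) (k : nat) (theta delta z : 'I_k -> R) :
  norm1 (fun j => z j - delta j) <= norm1 (fun j => z j - theta j) ->
  norm1 (fun j => theta j - delta j) <= 2 * norm1 (fun j => theta j - z j).
Proof.
rewrite /norm1 => nearer.
have sym : \sum_(j < k) `|z j - theta j| = \sum_(j < k) `|theta j - z j|.
  by apply: eq_bigr => j _; rewrite distrC.
rewrite sym in nearer.
apply: (@le_trans _ _ (\sum_(j < k) (`|theta j - z j| + `|z j - delta j|))).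
  by apply: ler_sum => j _; rewrite -[theta j - delta j](subrKA (z j)) ler_normD.
by rewrite big_split /=; lra.
Qed.

Lemma norm1_sub_perturb_le (R : realType) (k r : nat) (hrk : (r <= k)%N)
    (theta l : 'I_k -> R) (c : R) :
  0 <= c -> (forall j : 'I_k, (r <= j)%N -> theta j = 0) ->
  norm1 (fun j => theta j - (if theta j == 0 then theta j else theta j + c * l j))
  <= c * \sum_(i < r) `|l (widen_ord hrk i)|.
Proof.
move=> c0 supp; rewrite -(big_ord_narrow (F := fun j => `|l j|)) mulr_sumr /norm1.
rewrite (bigID (fun j : 'I_k => (j < r)%N)) /= [X in _ + X]big1 ?addr0.
  apply: ler_sum => j _; case: eqP => _; first by rewrite subrr normr0 mulr_ge0.
  by rewrite opprD addNKr normrN normrM ger0_norm.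
by move=> j; rewrite -leqNgt => /supp ->; rewrite eqxx subrr normr0.
Qed.

Definition hist_of (R : realType) {n k : nat} (a : {ffun 'I_k -> 'I_n.+1}) : 'I_k -> R :=
  fun j => (a j)%:R / n%:R.

Lemma is_histP (R : realType) (n k : nat) (theta : 'I_k -> R) :
  is_hist n theta -> exists a : {ffun 'I_k -> 'I_n.+1}, theta = hist_of R a.
Proof.
move=> [a [suma theta_a]].
have lt_an j : (a j < n.+1)%N by rewrite ltnS -suma (bigD1 j)//= leq_addr.
by exists [ffun j => Ordinal (lt_an j)]; apply/funext => j; rewrite /hist_of ffunE theta_a.
Qed.

Lemma measurable_finite_valued d (T : measurableType d) (V : Type) (A : finType)
    (h : A -> V) (g : T -> V) (p : V -> Prop) :
  (forall w, exists a, g w = h a) -> (forall a, measurable [set w | g w = h a]) ->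
  measurable [set w | p (g w)].
Proof.
move=> g_h mfib.
have -> : [set w | p (g w)] = \bigcup_(a in [set a | p (h a)]) [set w | g w = h a].
  apply/seteqP; split => [w pg|w [a /= pa ->//]].
  by have [a ga] := g_h w; exists a; rewrite /= -?ga.
by apply: fin_bigcup_measurable => //; exact: finite_finset.
Qed.

Theorem theorem5p1 (R : realType) (eps : R) (heps : 0 < eps) :
  exists M : R,
  forall (d : measure_display) (T : measurableType d) (P : probability T R)
         (alpha gamma : R) (n k r : nat) (theta : 'I_k -> R)
         (L : 'I_k -> T -> R) (delta : ('I_k -> R) -> ('I_k -> R)),
    0 < alpha -> 0 < gamma -> gamma < 1 ->
    (2 * k)%:R <= gamma * n%:R ->
    (1 <= r)%N -> (r < k)%N ->
    is_hist n theta ->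
    (forall j : 'I_k, (r <= j)%N -> theta j = 0) ->
    (forall j, laplace_rv P (L j)) ->
    mutually_independent P L ->
    (forall z, is_hist n (delta z) /\
       forall theta', is_hist n theta' ->
         norm1 (fun j => z j - delta z j) <= norm1 (fun j => z j - theta' j)) ->
    let z := fun (w : T) (j : 'I_k) =>
      if theta j == 0 then theta j
      else theta j + 2 / (n%:R * alpha) * L j w in
    (forall theta', measurable [set w | delta (z w) = theta']) ->
    (P [set w | (norm1 (fun j => theta j - delta (z w) j)
                  > M * (r%:R / (alpha * n%:R)))%R] <= eps%:E)%E.
Proof.
exists (4 / eps) => d T P alpha gamma n k r theta L delta alpha0 _ _ kn r1 rk
  hist_theta supp lapL _ nearest z mz.
have n0 : (0 < n)%N.
  case: n kn {hist_theta nearest z mz} => [|//]; rewrite mulr0 lern0.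
  by rewrite muln_eq0 => /eqP k0; move: rk; rewrite k0.
have an0 : 0 < alpha * n%:R by rewrite mulr_gt0 ?ltr0n.
pose S w := \sum_(i < r) `|L (widen_ord (ltnW rk) i) w|.
have dist_le w : norm1 (fun j => theta j - delta (z w) j) <= 4 / (alpha * n%:R) * S w.
  apply: le_trans (norm1_sub_nearest_le ((nearest (z w)).2 _ hist_theta)) _.
  have scale0 : 0 <= 2 / (n%:R * alpha) by rewrite divr_ge0 // mulrC ltW.
  rewrite (_ : 4 / _ = 2 * (2 / (n%:R * alpha))); last by field; rewrite pnatr_eq0 -lt0n n0 gt_eqF.
  by rewrite -mulrA ler_pM2l// norm1_sub_perturb_le.
pose thr := 4 / eps * (r%:R / (alpha * n%:R)).
have bad_sub : [set w | thr < norm1 (fun j => theta j - delta (z w) j)]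
    `<=` [set w | r%:R / eps < S w].
  move=> w /= /lt_le_trans /(_ (dist_le w)).
  rewrite (_ : thr = 4 / (alpha * n%:R) * (r%:R / eps)); last by rewrite /thr mulrACA [RHS]mulrACA [eps^-1 * _]mulrC.
  by rewrite ltr_pM2l ?divr_gt0.
have mbad : measurable [set w | thr < norm1 (fun j => theta j - delta (z w) j)].
  apply: (measurable_finite_valued (h := hist_of R (n:=n) (k:=k)) (g := fun w => delta (z w))
    (fun v => thr < norm1 (fun j => theta j - v j))) => [w|a].
    exact: is_histP (nearest (z w)).1.
  exact: mz.
have mS : measurable [set w | r%:R / eps < S w].
  rewrite -preimage_itvoy -[X in measurable X]setTI; apply: measurable_sum => //= i.
  by apply: measurableT_comp => //; exact: (lapL _).1.
have rpos : 0 < r%:R / eps by rewrite divr_gt0 ?ltr0n.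
apply: le_trans (le_measure _ _ _ bad_sub) _; rewrite ?inE//.
apply: le_trans (laplace_sum_abs_gt (fun i => lapL (widen_ord (ltnW rk) i)) rpos) _.
by rewrite lee_fin invf_div mulrCA divff ?mulr1 // pnatr_eq0 -lt0n.
Qed.
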